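(* Let $f\colon X\to Y$ be a morphism in a pre-Hilbert $*$-category. The following are equivalent: (i) $f$ is strictly contractive; (ii) $f$ has a codilation $(S,s_1,s_2)$ that is a coproduct (i.e. $(S,s_1,s_2)$ is a coproduct of $X$ and $Y$); (iii) $\begin{bmatrix}1 & f^*\\ f & 1\end{bmatrix}\succ 0$ as an endomorphism of $X\oplus Y$. Furthermore, if these equivalent conditions hold, then any codilation $(S,s_1,s_2)$ of $f$ that is a coproduct is a codilator of $f$.
   Context: A $*$-category is a category with a choice of $f^*\colon Y\to X$ for each $f\colon X\to Y$ such that $1^*=1$, $(gf)^*=f^*g^*$, $(f^* )^*=f$; $f$ is an isometry if $f^*f=1$. A pre-Hilbert $*$-category is a $*$-category with (R1) a zero object, (R2) orthonormal biproducts of all pairs of objects (biproducts $(X,s_1,r_1,s_2,r_2)$ with $r_k=s_k^*$; matrices of morphisms between biproducts are taken with respect to these), (R3) an isometric kernel for every morphism, and (R4) every diagonal $\Delta\colon X\to X\oplus X$ a kernel of some morphism. Such a category is additive. For Hermitian endomorphisms $a,b$ of $A$, $a\leq b$ means $b-a=y^*y$ for some $y\colon A\to Y$; $a\prec b$ (equivalently $b\succ a$) means $a\leq b$ and $b-a$ is invertible. A morphism $f$ is strictly contractive if $f^*f\prec 1$. A codilation of $f\colon X\to Y$ is a cospan $(T,t_1,t_2)$ with $t_1\colon X\to T$, $t_2\colon Y\to T$ isometries and $t_2^*t_1=f$. A codilator of $f$ is a codilation $(S,s_1,s_2)$ such that for every codilation $(T,t_1,t_2)$ of $f$ there is a unique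 isometry $t\colon S\to T$ with $ts_1=t_1$ and $ts_2=t_2$. *)

Set Implicit Arguments.
Unset Strict Implicit.

Record StarCat := {
  ob : Type;
  hom : ob -> ob -> Type;
  comp : forall X Y Z : ob, hom Y Z -> hom X Y -> hom X Z;
  idm : forall X : ob, hom X X;
  comp_assoc : forall (X Y Z W : ob) (h : hom Z W) (g : hom Y Z) (f : hom X Y),
      comp (comp h g) f = comp h (comp g f);
  comp_id_l : forall (X Y : ob) (f : hom X Y), comp (idm Y) f = f;
  comp_id_r : forall (X Y : ob) (f : hom X Y), comp f (idm X) = f;
  star : forall X Y : ob, hom X Y -> hom Y X;
  star_id : forall X : ob, star (idm X) = idm X;
  star_comp : forall (X Y Z : ob) (g : hom Y Z) (f : hom X Y),
      star (comp g f) = comp (star f) (star g);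
  star_invol : forall (X Y : ob) (f : hom X Y), star (star f) = f
}.

Arguments comp {s X Y Z} _ _.
Arguments idm {s} X.
Arguments star {s X Y} _.

Notation "g \o f" := (comp g f) (at level 40, left associativity).
Notation "f ^*" := (star f) (at level 2, format "f ^*").

Section Basic.
Variable C : StarCat.

Definition isometry {X Y : ob C} (f : hom X Y) : Prop := f^* \o f = idm X.

Definition invertible {X Y : ob C} (f : hom X Y) : Prop :=
  exists g : hom Y X, g \o f = idm X /\ f \o g = idm Y.

Definition is_coproduct {X Y S : ob C} (s1 : hom X S) (s2 : hom Y S) : Prop :=
  forall (Z : ob C) (g : hom X Z) (h : hom Y Z),
    exists u : hom S Z, (u \o s1 = g /\ u \o s2 = h) /\
      forall u' : hom S Z, u' \o s1 = g -> u' \o s2 = h -> u' = u.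

Definition is_product {X Y S : ob C} (r1 : hom S X) (r2 : hom S Y) : Prop :=
  forall (Z : ob C) (g : hom Z X) (h : hom Z Y),
    exists u : hom Z S, (r1 \o u = g /\ r2 \o u = h) /\
      forall u' : hom Z S, r1 \o u' = g -> r2 \o u' = h -> u' = u.

Definition is_biproduct (z : forall A B : ob C, hom A B) {X Y S : ob C}
  (s1 : hom X S) (r1 : hom S X) (s2 : hom Y S) (r2 : hom S Y) : Prop :=
  is_coproduct s1 s2 /\ is_product r1 r2 /\
  r1 \o s1 = idm X /\ r2 \o s2 = idm Y /\ r1 \o s2 = z Y X /\ r2 \o s1 = z X Y.

Definition is_orthonormal_biproduct (z : forall A B : ob C, hom A B) {X Y S : ob C}
  (s1 : hom X S) (r1 : hom S X) (s2 : hom Y S) (r2 : hom S Y) : Prop :=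
  is_biproduct z s1 r1 s2 r2 /\ r1 = s1^* /\ r2 = s2^*.

Definition is_kernel (z : forall A B : ob C, hom A B) {K X Y : ob C}
  (k : hom K X) (g : hom X Y) : Prop :=
  g \o k = z K Y /\
  forall (W : ob C) (h : hom W X), g \o h = z W Y ->
    exists u : hom W K, k \o u = h /\ forall u' : hom W K, k \o u' = h -> u' = u.

End Basic.

Record PreHilbert := {
  phC :> StarCat;
  zobj : ob phC;
  zin : forall X : ob phC, hom zobj X;
  zout : forall X : ob phC, hom X zobj;
  zin_uniq : forall (X : ob phC) (f g : hom zobj X), f = g;
  zout_uniq : forall (X : ob phC) (f g : hom X zobj), f = g;
  bp : ob phC -> ob phC -> ob phC;
  bs1 : forall X Y : ob phC, hom X (bp X Y);
  bs2 : forall X Y : ob phC, hom Y (bp X Y);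
  bp_ok : forall X Y : ob phC,
      is_orthonormal_biproduct (fun A B => zin B \o zout A)
        (bs1 X Y) (bs1 X Y)^* (bs2 X Y) (bs2 X Y)^*;
  R3 : forall (X Y : ob phC) (g : hom X Y), exists (K : ob phC) (k : hom K X),
      isometry k /\ is_kernel (fun A B => zin B \o zout A) k g;
  R4 : forall (X : ob phC) (d : hom X (bp X X)),
      (bs1 X X)^* \o d = idm X -> (bs2 X X)^* \o d = idm X ->
      exists (Z : ob phC) (g : hom (bp X X) Z), is_kernel (fun A B => zin B \o zout A) d g
}.

Arguments zin {p} X.
Arguments zout {p} X.
Arguments bp {p} X Y.
Arguments bs1 {p} X Y.
Arguments bs2 {p} X Y.

Section PH.
Variable C : PreHilbert.

Definition zero (A B : ob C) : hom A B := zin B \o zout A.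

(** [h] is the sum [f + g] in the (semi)additive structure induced by the
    biproducts: h = nabla o <f, g>, with <f,g> : X -> Y (+) Y and
    nabla : Y (+) Y -> Y the codiagonal. *)
Definition is_sum {X Y : ob C} (f g h : hom X Y) : Prop :=
  exists p : hom X (bp Y Y),
    (bs1 Y Y)^* \o p = f /\ (bs2 Y Y)^* \o p = g /\
    exists n : hom (bp Y Y) Y, n \o bs1 Y Y = idm Y /\ n \o bs2 Y Y = idm Y /\
      h = n \o p.

Definition hle {A : ob C} (a b : hom A A) : Prop :=
  exists (Y' : ob C) (y : hom A Y'), is_sum a (y^* \o y) b.

Definition hprec {A : ob C} (a b : hom A A) : Prop :=
  exists c : hom A A, is_sum a c b /\
    (exists (Y' : ob C) (y : hom A Y'), c = y^* \o y) /\ invertible c.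

Definition strictly_contractive {X Y : ob C} (f : hom X Y) : Prop :=
  hprec (f^* \o f) (idm X).

Definition is_codilation {X Y : ob C} (f : hom X Y) (T : ob C)
  (t1 : hom X T) (t2 : hom Y T) : Prop :=
  isometry t1 /\ isometry t2 /\ t2^* \o t1 = f.

Definition is_codilator {X Y : ob C} (f : hom X Y) (S : ob C)
  (s1 : hom X S) (s2 : hom Y S) : Prop :=
  is_codilation f s1 s2 /\
  forall (T : ob C) (t1 : hom X T) (t2 : hom Y T), is_codilation f t1 t2 ->
    exists t : hom S T, (isometry t /\ t \o s1 = t1 /\ t \o s2 = t2) /\
      forall t' : hom S T, isometry t' -> t' \o s1 = t1 -> t' \o s2 = t2 -> t' = t.

Definition is_matrix2 {X Y : ob C} (m : hom (bp X Y) (bp X Y))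
  (a : hom X X) (b : hom Y X) (c : hom X Y) (d : hom Y Y) : Prop :=
  (bs1 X Y)^* \o m \o bs1 X Y = a /\ (bs1 X Y)^* \o m \o bs2 X Y = b /\
  (bs2 X Y)^* \o m \o bs1 X Y = c /\ (bs2 X Y)^* \o m \o bs2 X Y = d.

End PH.

(* Biproducts make every hom-set a commutative monoid, and (R3), (R4) provide negatives, so
   morphisms out of and into [X (+) Y] are handled by 2x2 matrices.  For a codilation
   (S, s1, s2) of f, the Gram matrix [u^* u] of [u := [s1 s2] : X (+) Y -> S] is
   [[1, f^*], [f, 1]]; S is a coproduct iff [u] is invertible, and then [u^* u] is positive
   and invertible, hence so is its Schur complement [1 - f^* f].  Conversely, if
   [1 - f^* f = y^* y] is invertible, [y] corestricts to an isomorphism [d] onto its range J,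
   and ([f; d], first injection) is a codilation into [Y (+) J] that is a coproduct.  All
   codilations of f share the same Gram matrix, so the comparison map out of a coproduct
   codilation is an isometry: it is a codilator. *)

From Stdlib Require Import ClassicalEpsilon.

Section PreHilbertTheory.
Variable C : PreHilbert.
Implicit Types A B D J K S T U V W X Y Z : ob C.

Lemma zero_comp {A B D} (h : hom A B) : zero B D \o h = zero A D.
Proof. unfold zero. rewrite comp_assoc. f_equal. apply zout_uniq. Qed.

Lemma comp_zero {A B D} (h : hom B D) : h \o zero A B = zero A D.
Proof. unfold zero. rewrite <- comp_assoc. f_equal. apply zin_uniq. Qed.

Lemma star_zero {A B} : (zero A B)^* = zero B A.
Proof. unfold zero. rewrite star_comp. f_equal; [apply zin_uniq | apply zout_uniq]. Qed.

Lemma bs1_isometry {A B} : (bs1 A B)^* \o bs1 A B = idm A.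
Proof. destruct (bp_ok A B) as [[_ [_ [H _]]] _]. exact H. Qed.

Lemma bs2_isometry {A B} : (bs2 A B)^* \o bs2 A B = idm B.
Proof. destruct (bp_ok A B) as [[_ [_ [_ [H _]]]] _]. exact H. Qed.

Lemma bs1_orth {A B} : (bs1 A B)^* \o bs2 A B = zero B A.
Proof. destruct (bp_ok A B) as [[_ [_ [_ [_ [H _]]]]] _]. exact H. Qed.

Lemma bs2_orth {A B} : (bs2 A B)^* \o bs1 A B = zero A B.
Proof. destruct (bp_ok A B) as [[_ [_ [_ [_ [_ H]]]]] _]. exact H. Qed.

Lemma into_bp_ext {W A B} (h h' : hom W (bp A B)) :
  (bs1 A B)^* \o h = (bs1 A B)^* \o h' -> (bs2 A B)^* \o h = (bs2 A B)^* \o h' -> h = h'.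
Proof.
  intros H1 H2. destruct (bp_ok A B) as [[_ [Hprod _]] _].
  destruct (Hprod W ((bs1 A B)^* \o h) ((bs2 A B)^* \o h)) as [u [_ Hu]].
  rewrite (Hu h) by reflexivity. symmetry. apply Hu; symmetry; assumption.
Qed.

Lemma from_bp_ext {W A B} (h h' : hom (bp A B) W) :
  h \o bs1 A B = h' \o bs1 A B -> h \o bs2 A B = h' \o bs2 A B -> h = h'.
Proof.
  intros H1 H2. destruct (bp_ok A B) as [[Hcoprod _] _].
  destruct (Hcoprod W (h \o bs1 A B) (h \o bs2 A B)) as [u [_ Hu]].
  rewrite (Hu h) by reflexivity. symmetry. apply Hu; symmetry; assumption.
Qed.

Lemma bpair_exists {W A B} (f : hom W A) (g : hom W B) :
  { h : hom W (bp A B) | (bs1 A B)^* \o h = f /\ (bs2 A B)^* \o h = g }.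
Proof.
  apply constructive_indefinite_description.
  destruct (bp_ok A B) as [[_ [Hprod _]] _].
  destruct (Hprod W f g) as [h [Hh _]]. exists h. exact Hh.
Qed.

Definition bpair {W A B} (f : hom W A) (g : hom W B) : hom W (bp A B) :=
  proj1_sig (bpair_exists f g).

Definition bcopair {W A B} (f : hom A W) (g : hom B W) : hom (bp A B) W :=
  (bpair f^* g^*)^*.

Lemma bpair1 {W A B} (f : hom W A) (g : hom W B) : (bs1 A B)^* \o bpair f g = f.
Proof. exact (proj1 (proj2_sig (bpair_exists f g))). Qed.

Lemma bpair2 {W A B} (f : hom W A) (g : hom W B) : (bs2 A B)^* \o bpair f g = g.
Proof. exact (proj2 (proj2_sig (bpair_exists f g))). Qed.

Lemma bcopair1 {W A B} (f : hom A W) (g : hom B W) : bcopair f g \o bs1 A B = f.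
Proof.
  unfold bcopair. rewrite <- (star_invol (bs1 A B)), <- star_comp, bpair1. apply star_invol.
Qed.

Lemma bcopair2 {W A B} (f : hom A W) (g : hom B W) : bcopair f g \o bs2 A B = g.
Proof.
  unfold bcopair. rewrite <- (star_invol (bs2 A B)), <- star_comp, bpair2. apply star_invol.
Qed.

Lemma star_bpair {W A B} (f : hom W A) (g : hom W B) : (bpair f g)^* = bcopair f^* g^*.
Proof. unfold bcopair. rewrite !star_invol. reflexivity. Qed.

Lemma star_bcopair {W A B} (f : hom A W) (g : hom B W) : (bcopair f g)^* = bpair f^* g^*.
Proof. apply star_invol. Qed.

Lemma bpair_comp {V W A B} (f : hom W A) (g : hom W B) (h : hom V W) :
  bpair f g \o h = bpair (f \o h) (g \o h).
Proof. apply into_bp_ext; rewrite <- comp_assoc, ?bpair1, ?bpair2; reflexivity. Qed.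

Lemma comp_bcopair {V W A B} (f : hom A W) (g : hom B W) (h : hom W V) :
  h \o bcopair f g = bcopair (h \o f) (h \o g).
Proof. apply from_bp_ext; rewrite comp_assoc, ?bcopair1, ?bcopair2; reflexivity. Qed.

Lemma bpair_eta {W A B} (h : hom W (bp A B)) :
  bpair ((bs1 A B)^* \o h) ((bs2 A B)^* \o h) = h.
Proof. apply into_bp_ext; rewrite ?bpair1, ?bpair2; reflexivity. Qed.

Lemma bpair_f0 {W A B} (f : hom W A) : bpair f (zero W B) = bs1 A B \o f.
Proof.
  apply into_bp_ext; rewrite ?bpair1, ?bpair2, <- comp_assoc,
    ?bs1_isometry, ?bs2_orth, ?comp_id_l, ?zero_comp; reflexivity.
Qed.

Lemma bpair_0f {W A B} (g : hom W B) : bpair (zero W A) g = bs2 A B \o g.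
Proof.
  apply into_bp_ext; rewrite ?bpair1, ?bpair2, <- comp_assoc,
    ?bs1_orth, ?bs2_isometry, ?comp_id_l, ?zero_comp; reflexivity.
Qed.

Definition addm {A B} (f g : hom A B) : hom A B := bcopair (idm B) (idm B) \o bpair f g.

Lemma addm_bcopair {A B} (f g : hom A B) : addm f g = bcopair f g \o bpair (idm A) (idm A).
Proof.
  set (fg := bpair (f \o (bs1 A A)^*) (g \o (bs2 A A)^*)).
  assert (Hr : fg \o bpair (idm A) (idm A) = bpair f g).
  { unfold fg. rewrite bpair_comp, !comp_assoc, bpair1, bpair2, !comp_id_r. reflexivity. }
  assert (Hl : bcopair (idm B) (idm B) \o fg = bcopair f g).
  { apply from_bp_ext; rewrite comp_assoc; unfold fg; rewrite bpair_comp, !comp_assoc.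
    - rewrite bs1_isometry, bs2_orth, comp_id_r, comp_zero, bpair_f0,
        <- comp_assoc, bcopair1, comp_id_l, bcopair1. reflexivity.
    - rewrite bs1_orth, bs2_isometry, comp_id_r, comp_zero, bpair_0f,
        <- comp_assoc, bcopair2, comp_id_l, bcopair2. reflexivity. }
  unfold addm. rewrite <- Hr, <- comp_assoc, Hl. reflexivity.
Qed.

Lemma addm0 {A B} (f : hom A B) : addm f (zero A B) = f.
Proof. unfold addm. rewrite bpair_f0, <- comp_assoc, bcopair1, comp_id_l. reflexivity. Qed.

Lemma add0m {A B} (f : hom A B) : addm (zero A B) f = f.
Proof. unfold addm. rewrite bpair_0f, <- comp_assoc, bcopair2, comp_id_l. reflexivity. Qed.

Lemma compDr {A B D} (h : hom B D) (f g : hom A B) : h \o addm f g = addm (h \o f) (h \o g).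
Proof. rewrite !addm_bcopair, <- comp_assoc, comp_bcopair. reflexivity. Qed.

Lemma compDl {A B D} (h : hom D A) (f g : hom A B) : addm f g \o h = addm (f \o h) (g \o h).
Proof. unfold addm. rewrite comp_assoc, bpair_comp. reflexivity. Qed.

(* Eckmann-Hilton: commutativity and associativity of [addm] follow from this. *)
Lemma addm_interchange {A B} (a b c d : hom A B) :
  addm (addm a b) (addm c d) = addm (addm a c) (addm b d).
Proof.
  assert (Hpair : bpair (addm a b) (addm c d) = addm (bpair a c) (bpair b d)).
  { apply into_bp_ext; rewrite compDr, ?bpair1, ?bpair2; reflexivity. }
  unfold addm at 1. rewrite Hpair, compDr. reflexivity.
Qed.

Lemma addmC {A B} (a b : hom A B) : addm a b = addm b a.
Proof.
  pose proof (addm_interchange (zero A B) a b (zero A B)) as H.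
  rewrite !add0m, !addm0 in H. exact H.
Qed.

Lemma addmA {A B} (a b c : hom A B) : addm (addm a b) c = addm a (addm b c).
Proof.
  pose proof (addm_interchange a b (zero A B) c) as H.
  rewrite !add0m, !addm0 in H. exact H.
Qed.

Lemma starD {A B} (f g : hom A B) : (addm f g)^* = addm f^* g^*.
Proof.
  unfold addm. rewrite star_comp, star_bpair, star_bcopair, star_id, <- addm_bcopair. reflexivity.
Qed.

Lemma idm_bp {A B} : idm (bp A B) = addm (bs1 A B \o (bs1 A B)^*) (bs2 A B \o (bs2 A B)^*).
Proof.
  apply from_bp_ext; rewrite compDl, comp_id_l, !comp_assoc.
  - rewrite bs1_isometry, bs2_orth, comp_id_r, comp_zero, addm0. reflexivity.
  - rewrite bs1_orth, bs2_isometry, comp_id_r, comp_zero, add0m. reflexivity.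
Qed.

Lemma comp_through_bp {U V A B} (M : hom (bp A B) V) (N : hom U (bp A B)) :
  M \o N = addm (M \o bs1 A B \o ((bs1 A B)^* \o N)) (M \o bs2 A B \o ((bs2 A B)^* \o N)).
Proof.
  rewrite <- (comp_id_l N) at 1.
  rewrite <- comp_assoc, idm_bp, compDr, compDl, !comp_assoc. reflexivity.
Qed.

Lemma bcopair_bpair {U V A B} (u : hom A V) (v : hom B V) (f : hom U A) (g : hom U B) :
  bcopair u v \o bpair f g = addm (u \o f) (v \o g).
Proof. rewrite comp_through_bp, bcopair1, bcopair2, bpair1, bpair2. reflexivity. Qed.

Lemma is_sum_iff {A B} (f g h : hom A B) : is_sum f g h <-> h = addm f g.
Proof.
  split.
  - intros [p [H1 [H2 [n [Hn1 [Hn2 ->]]]]]].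
    replace p with (bpair f g) by (apply into_bp_ext; rewrite ?bpair1, ?bpair2; auto).
    replace n with (bcopair (idm B) (idm B))
      by (apply from_bp_ext; rewrite ?bcopair1, ?bcopair2; auto).
    reflexivity.
  - intros ->. exists (bpair f g). split; [apply bpair1 | split; [apply bpair2 |]].
    exists (bcopair (idm B) (idm B)).
    split; [apply bcopair1 | split; [apply bcopair2 | reflexivity]].
Qed.


Lemma comp_bpair {W A B V} (g : hom (bp A B) V) (u : hom W A) (v : hom W B) :
  g \o bpair u v = addm (g \o bs1 A B \o u) (g \o bs2 A B \o v).
Proof. rewrite comp_through_bp, bpair1, bpair2. reflexivity. Qed.

Lemma bpair_gram {W A B V} (f : hom W A) (g : hom W B) (f' : hom V A) (g' : hom V B) :
  (bpair f g)^* \o bpair f' g' = addm (f^* \o f') (g^* \o g').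
Proof. rewrite star_bpair. apply bcopair_bpair. Qed.

Lemma diagonal_kernel_mono {A Z} (g : hom (bp A A) Z) :
  is_kernel (@zero C) (bpair (idm A) (idm A)) g ->
  forall W (u u' : hom W A), g \o bs1 A A \o u = g \o bs1 A A \o u' -> u = u'.
Proof.
  intros [Hg0 Hker] W u u' Hu.
  assert (Hsum : addm (g \o bs1 A A) (g \o bs2 A A) = zero A Z).
  { rewrite comp_bpair, !comp_id_r in Hg0. exact Hg0. }
  assert (Huu' : g \o bpair u u' = zero W Z).
  { rewrite comp_bpair, Hu, <- compDl, Hsum. apply zero_comp. }
  destruct (Hker W _ Huu') as [t [Ht _]].
  pose proof (bpair1 u u') as E1. pose proof (bpair2 u u') as E2.
  rewrite <- Ht, <- comp_assoc in E1, E2. rewrite bpair1, comp_id_l in E1.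
  rewrite bpair2, comp_id_l in E2. congruence.
Qed.

(* The witness is [t := j1^* j2 + j2^* j1]; moreover [j1^* j1 = j2^* j2]. *)
Lemma antipodal_pair {K A} (j1 j2 : hom K A) :
  addm j1 j2 = zero K A -> addm (j1^* \o j1) (j2^* \o j2) = idm K ->
  exists t : hom K K, addm (idm K) t = zero K K /\ t^* = t /\ j2 = j1 \o t /\
    addm (j1^* \o j1) (j1^* \o j1) = idm K.
Proof.
  intros Hj Hiso.
  set (P := j1^* \o j1) in *. set (Q := j2^* \o j2) in *. set (R := j1^* \o j2).
  assert (HPR : addm P R = zero K K).
  { unfold P, R. rewrite <- compDr, Hj. apply comp_zero. }
  assert (HRQ : addm R Q = zero K K).
  { unfold Q, R. rewrite <- compDl, <- starD, Hj, star_zero. apply zero_comp. }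
  assert (HRQ' : addm R^* Q = zero K K).
  { unfold Q, R. rewrite star_comp, star_invol, <- compDr, Hj. apply comp_zero. }
  assert (HPQ : P = Q).
  { rewrite <- (addm0 P), <- HRQ, <- addmA, HPR, add0m. reflexivity. }
  exists (addm R R^*). split; [|split; [|split]].
  - rewrite <- Hiso, addm_interchange, HPR, add0m, addmC. exact HRQ'.
  - rewrite starD, star_invol. apply addmC.
  - assert (Hneg : addm j1 (j1 \o addm R R^*) = zero K A).
    { rewrite <- (comp_id_r j1) at 1. rewrite <- compDr, <- Hiso, addm_interchange,
        HPR, add0m, addmC, HRQ'. apply comp_zero. }
    rewrite <- (addm0 j2), <- Hneg, <- addmA, (addmC j2), Hj, add0m. reflexivity.
  - fold P. rewrite HPQ at 2. exact Hiso.
Qed.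

(* With [g] from (R4), [g \o bs1] is monic and [g \o bs1 + g \o bs2 = 0].  The isometric
   kernel [j] of the codiagonal, through which [g^*] factors, yields [n] with
   [g \o bs1 \o n = g \o bs2]; hence [g \o bs1 \o (1 + n) = 0] and [1 + n = 0]. *)
Lemma negative_identity_exists A : exists n : hom A A, addm (idm A) n = zero A A.
Proof.
  destruct (R4 (bpair1 (idm A) (idm A)) (bpair2 (idm A) (idm A))) as [Z [g Hg]].
  pose proof (diagonal_kernel_mono g Hg) as Hmono.
  destruct Hg as [Hg0 _].
  destruct (R3 (bcopair (idm A) (idm A))) as [K [j [Hj [Hj0 Hjker]]]].
  assert (Hg' : bcopair (idm A) (idm A) \o g^* = zero Z A).
  { rewrite <- (star_invol (bcopair _ _)), <- star_comp, star_bcopair, star_id, Hg0.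
    apply star_zero. }
  destruct (Hjker Z g^* Hg') as [w [Hw _]].
  set (j1 := (bs1 A A)^* \o j). set (j2 := (bs2 A A)^* \o j).
  destruct (antipodal_pair j1 j2) as [t [Ht [Hts [Hj2 Hhalf]]]].
  { rewrite <- (comp_id_l j1), <- (comp_id_l j2), <- bcopair_bpair.
    unfold j1, j2. rewrite bpair_eta. exact Hj0. }
  { rewrite <- bpair_gram. unfold j1, j2. rewrite bpair_eta. exact Hj. }
  assert (Hgi : forall i : hom A (bp A A), g \o i = w^* \o (i^* \o j)^*).
  { intro i. rewrite star_comp, star_invol, <- comp_assoc, <- star_comp, Hw, star_invol.
    reflexivity. }
  assert (Hsum : addm (g \o bs1 A A) (g \o bs2 A A) = zero A Z).
  { rewrite comp_bpair, !comp_id_r in Hg0. exact Hg0. }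
  exists (j1 \o addm t t \o j1^*). apply Hmono.
  rewrite compDr, comp_id_r, comp_zero, <- Hsum. f_equal.
  rewrite !Hgi. fold j1 j2. rewrite Hj2, star_comp, Hts, !comp_assoc. f_equal.
  rewrite <- (comp_assoc j1^* j1), <- comp_assoc, compDr, <- compDl, Hhalf, comp_id_l.
  reflexivity.
Qed.

Definition opp_idm A : hom A A :=
  proj1_sig (constructive_indefinite_description _ (negative_identity_exists A)).

Definition oppm {A B} (f : hom A B) : hom A B := opp_idm B \o f.

Lemma addmN {A B} (f : hom A B) : addm f (oppm f) = zero A B.
Proof.
  unfold oppm, opp_idm. destruct constructive_indefinite_description as [n Hn]. simpl.
  rewrite <- (comp_id_l f) at 1. rewrite <- compDl, Hn. apply zero_comp.
Qed.

Lemma addNm {A B} (f : hom A B) : addm (oppm f) f = zero A B.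
Proof. rewrite addmC. apply addmN. Qed.

Lemma oppm_unique {A B} (f g : hom A B) : addm f g = zero A B -> g = oppm f.
Proof.
  intros H. rewrite <- (addm0 g), <- (addmN f), <- addmA, (addmC g), H, add0m. reflexivity.
Qed.

Lemma compNr {A B D} (h : hom B D) (f : hom A B) : h \o oppm f = oppm (h \o f).
Proof. apply oppm_unique. rewrite <- compDr, addmN. apply comp_zero. Qed.

Lemma compNl {A B D} (h : hom D A) (f : hom A B) : oppm f \o h = oppm (f \o h).
Proof. apply oppm_unique. rewrite <- compDl, addmN. apply zero_comp. Qed.

Lemma starN {A B} (f : hom A B) : (oppm f)^* = oppm f^*.
Proof. apply oppm_unique. rewrite <- starD, addmN. apply star_zero. Qed.

Lemma oppmK {A B} (f : hom A B) : oppm (oppm f) = f.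
Proof. symmetry. apply oppm_unique. apply addNm. Qed.

Lemma oppm0 {A B} : oppm (zero A B) = zero A B.
Proof. symmetry. apply oppm_unique. apply add0m. Qed.

Lemma addmNK {A B} (f g : hom A B) : addm f (addm g (oppm f)) = g.
Proof. rewrite (addmC g), <- addmA, addmN. apply add0m. Qed.

Lemma subm_eq {A B} (a b c : hom A B) : c = addm b (oppm a) <-> b = addm a c.
Proof.
  split; intros ->.
  - symmetry. apply addmNK.
  - rewrite addmC, <- addmA, addNm. symmetry. apply add0m.
Qed.

Lemma subm_eq0 {A B} (a b : hom A B) : addm a (oppm b) = zero A B -> a = b.
Proof. intros H. rewrite <- (oppmK b). apply oppm_unique. rewrite addmC. exact H. Qed.


Lemma invertible_star {A B} (u : hom A B) : invertible u -> invertible u^*.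
Proof.
  intros [v [Hvu Huv]]. exists v^*.
  rewrite <- !star_comp, Hvu, Huv, !star_id. split; reflexivity.
Qed.

Lemma invertible_cancel_r {A B D} (u : hom A B) (a b : hom B D) :
  invertible u -> a \o u = b \o u -> a = b.
Proof.
  intros [v [_ Huv]] H.
  rewrite <- (comp_id_r a), <- (comp_id_r b), <- Huv, <- !comp_assoc, H. reflexivity.
Qed.

Lemma invertible_cancel_l {A B D} (u : hom A B) (a b : hom D A) :
  invertible u -> u \o a = u \o b -> a = b.
Proof.
  intros [v [Hvu _]] H.
  rewrite <- (comp_id_l a), <- (comp_id_l b), <- Hvu, !comp_assoc, H. reflexivity.
Qed.

Lemma invertible_gram {A B} (u : hom A B) : invertible u -> invertible (u^* \o u).
Proof.
  intros Hu. destruct (invertible_star u Hu) as [v' [Hv'u Huv']].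
  destruct Hu as [v [Hvu Huv]]. exists (v \o v').
  rewrite !comp_assoc. split.
  - rewrite <- (comp_assoc v'), Hv'u, comp_id_l. exact Hvu.
  - rewrite <- (comp_assoc u v), Huv, comp_id_l. exact Huv'.
Qed.

Lemma gram_entry {A B D W} (u : hom A W) (s : hom B A) (t : hom D A) :
  s^* \o (u^* \o u) \o t = (u \o s)^* \o (u \o t).
Proof. rewrite star_comp, !comp_assoc. reflexivity. Qed.

Lemma is_matrix2_unique {A B} (m m' : hom (bp A B) (bp A B)) a b c d :
  is_matrix2 m a b c d -> is_matrix2 m' a b c d -> m = m'.
Proof.
  intros [M11 [M12 [M21 M22]]] [N11 [N12 [N21 N22]]].
  rewrite comp_assoc in M11, M12, M21, M22, N11, N12, N21, N22.
  apply from_bp_ext; apply into_bp_ext; congruence.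
Qed.

Lemma entry_comp {A B U U' V V'} (r : hom V V') (M : hom (bp A B) V)
  (N : hom U (bp A B)) (s : hom U' U) :
  r \o (M \o N) \o s =
  addm (r \o M \o bs1 A B \o ((bs1 A B)^* \o N \o s))
       (r \o M \o bs2 A B \o ((bs2 A B)^* \o N \o s)).
Proof. rewrite comp_through_bp, compDr, compDl, !comp_assoc. reflexivity. Qed.

Lemma hprecE {A} (a b : hom A A) :
  hprec a b <->
  (exists W (y : hom A W), addm b (oppm a) = y^* \o y) /\ invertible (addm b (oppm a)).
Proof.
  split.
  - intros [c [Hs [Hy Hc]]]. apply is_sum_iff, subm_eq in Hs. subst c.
    split; assumption.
  - intros [Hy Hc]. exists (addm b (oppm a)).
    split; [apply is_sum_iff, subm_eq; reflexivity | split; assumption].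
Qed.

Lemma coproduct_iff_invertible_bcopair {X Y S} (s1 : hom X S) (s2 : hom Y S) :
  is_coproduct s1 s2 <-> invertible (bcopair s1 s2).
Proof.
  split.
  - intros H. destruct (H (bp X Y) (bs1 X Y) (bs2 X Y)) as [u [[Hu1 Hu2] _]].
    exists u. split.
    + apply from_bp_ext; rewrite comp_assoc, ?bcopair1, ?bcopair2, comp_id_l; assumption.
    + destruct (H S s1 s2) as [v [_ Hv]].
      transitivity v; [|symmetry]; apply Hv;
        rewrite ?comp_assoc, ?Hu1, ?Hu2, ?bcopair1, ?bcopair2, ?comp_id_l; reflexivity.
  - intros [u [Hu1 Hu2]] Z g h. exists (bcopair g h \o u). split; [split|].
    + rewrite <- (bcopair1 s1 s2), <- comp_assoc, (comp_assoc _ u), Hu1, comp_id_r.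
      apply bcopair1.
    + rewrite <- (bcopair2 s1 s2), <- comp_assoc, (comp_assoc _ u), Hu1, comp_id_r.
      apply bcopair2.
    + intros u' E1 E2.
      assert (E : u' \o bcopair s1 s2 = bcopair g h).
      { apply from_bp_ext; rewrite comp_assoc, ?bcopair1, ?bcopair2; assumption. }
      rewrite <- E, comp_assoc, Hu2, comp_id_r. reflexivity.
Qed.

Lemma schur_complement_invertible {A B} (m : hom (bp A B) (bp A B)) p q r :
  is_matrix2 m p q r (idm B) -> invertible m -> invertible (addm p (oppm (q \o r))).
Proof.
  intros [M11 [M12 [M21 M22]]] [n [Hnm Hmn]].
  set (a := (bs1 A B)^* \o n \o bs1 A B).
  set (b := (bs1 A B)^* \o n \o bs2 A B).
  set (c := (bs2 A B)^* \o n \o bs1 A B).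
  pose proof (entry_comp (bs1 A B)^* m n (bs1 A B)) as E11.
  pose proof (entry_comp (bs2 A B)^* m n (bs1 A B)) as E21.
  pose proof (entry_comp (bs1 A B)^* n m (bs1 A B)) as F11.
  pose proof (entry_comp (bs1 A B)^* n m (bs2 A B)) as F12.
  rewrite Hmn, comp_id_r, bs1_isometry, M11, M12 in E11.
  rewrite Hmn, comp_id_r, bs2_orth, M21, M22, comp_id_l in E21.
  rewrite Hnm, comp_id_r, bs1_isometry, M11, M21 in F11.
  rewrite Hnm, comp_id_r, bs1_orth, M12, M22, comp_id_r in F12.
  fold a b c in E11, E21, F11, F12.
  assert (Hc : c = oppm (r \o a)) by (apply oppm_unique; symmetry; exact E21).
  assert (Hb : b = oppm (a \o q)) by (apply oppm_unique; symmetry; exact F12).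
  exists a. split.
  - rewrite compDr, compNr, F11, Hb, compNl, comp_assoc. reflexivity.
  - rewrite compDl, compNl, E11, Hc, compNr, comp_assoc. reflexivity.
Qed.

Lemma schur_complement_gram {A B W} (y : hom (bp A B) W) p q r :
  is_matrix2 (y^* \o y) p q r (idm B) ->
  exists z : hom A W, addm p (oppm (q \o r)) = z^* \o z.
Proof.
  intros [M11 [M12 [M21 M22]]].
  rewrite gram_entry in M11; rewrite gram_entry in M12;
  rewrite gram_entry in M21; rewrite gram_entry in M22.
  set (y1 := y \o bs1 A B) in *. set (y2 := y \o bs2 A B) in *.
  exists (addm y1 (oppm (y2 \o r))).
  rewrite starD, starN, compDl, !compDr, !compNl, !compNr, oppmK, M11.
  rewrite <- comp_assoc, M12, star_comp, !comp_assoc, M21, <- (comp_assoc y2^*), M22, comp_id_l.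
  rewrite addNm, addm0. reflexivity.
Qed.

(* [J] is the range of [y], the kernel of the projection [1 - y (y^* y)^-1 y^*]. *)
Lemma gram_invertible_factor {X W} (y : hom X W) :
  invertible (y^* \o y) -> exists J (y0 : hom X J), y0^* \o y0 = y^* \o y /\ invertible y0.
Proof.
  intros [c' [Hc'c Hcc']].
  set (e := y \o (c' \o y^*)).
  assert (Hey : addm (idm W) (oppm e) \o y = zero X W).
  { rewrite compDl, compNl, comp_id_l. unfold e. rewrite !comp_assoc, Hc'c, comp_id_r.
    apply addmN. }
  destruct (R3 (addm (idm W) (oppm e))) as [J [j [Hj [Hj0 Hker]]]].
  destruct (Hker X y Hey) as [u [Hu _]].
  assert (Hjy : j \o (j^* \o y) = y).
  { rewrite <- Hu, <- (comp_assoc j^*), Hj, comp_id_l. reflexivity. }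
  assert (Hej : e \o j = j).
  { symmetry. apply subm_eq0. rewrite <- compNl, <- (comp_id_l j) at 1.
    rewrite <- compDl. exact Hj0. }
  exists J, (j^* \o y). split.
  - rewrite star_comp, star_invol, comp_assoc, Hjy. reflexivity.
  - exists (c' \o (j^* \o y)^*). rewrite star_comp, star_invol. split.
    + rewrite !comp_assoc, Hjy. exact Hc'c.
    + transitivity (j^* \o (e \o j)); [unfold e; rewrite !comp_assoc; reflexivity |].
      rewrite Hej. exact Hj.
Qed.

Lemma bpair_codilation_coproduct {X Y J} (f : hom X Y) (d : hom X J) :
  invertible d -> addm (f^* \o f) (d^* \o d) = idm X ->
  is_codilation f (bpair f d) (bs1 Y J) /\ is_coproduct (bpair f d) (bs1 Y J).
Proof.
  intros [v [Hvd Hdv]] Hdefect. split.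
  - split; [|split].
    + unfold isometry. rewrite bpair_gram. exact Hdefect.
    + apply bs1_isometry.
    + apply bpair1.
  - apply coproduct_iff_invertible_bcopair.
    set (w := v \o (bs2 Y J)^*).
    exists (bpair w (addm (bs1 Y J)^* (oppm (f \o w)))). unfold w. split.
    + apply from_bp_ext; rewrite comp_assoc, ?bcopair1, ?bcopair2, comp_id_l, bpair_comp,
        compDl, compNl, !comp_assoc.
      * rewrite bpair1, bpair2, Hvd, comp_id_r, addmN, bpair_f0. apply comp_id_r.
      * rewrite bs1_isometry, bs2_orth, !comp_zero, oppm0, addm0, bpair_0f. apply comp_id_r.
    + rewrite bcopair_bpair. apply into_bp_ext; rewrite comp_id_r, !compDr, <- !comp_assoc,
        ?bpair1, ?bpair2, ?bs1_isometry, ?bs2_orth, ?comp_id_l, ?zero_comp.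
      * apply addmNK.
      * rewrite !addm0, Hdv, comp_id_l. reflexivity.
Qed.

Lemma codilation_gram {X Y T} (f : hom X Y) (t1 : hom X T) (t2 : hom Y T) :
  is_codilation f t1 t2 ->
  is_matrix2 ((bcopair t1 t2)^* \o bcopair t1 t2) (idm X) f^* f (idm Y).
Proof.
  intros [H1 [H2 H3]]. unfold is_matrix2.
  rewrite !gram_entry, bcopair1, bcopair2, H1, H2, H3, <- H3, star_comp, star_invol.
  repeat split.
Qed.

Lemma coproduct_codilation_is_codilator {X Y S} (f : hom X Y) (s1 : hom X S) (s2 : hom Y S) :
  is_codilation f s1 s2 -> is_coproduct s1 s2 -> is_codilator f s1 s2.
Proof.
  intros Hs Hc. split; [exact Hs |]. intros T t1 t2 Ht.
  destruct (Hc T t1 t2) as [t [[E1 E2] Hunique]].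
  exists t. split; [split; [| split; assumption] | intros t' _; apply Hunique].
  pose proof (proj1 (coproduct_iff_invertible_bcopair s1 s2) Hc) as Hu.
  set (u := bcopair s1 s2) in *.
  assert (Htu : t \o u = bcopair t1 t2) by (unfold u; rewrite comp_bcopair, E1, E2; reflexivity).
  assert (Hgram : (t \o u)^* \o (t \o u) = u^* \o u).
  { rewrite Htu. eapply is_matrix2_unique; apply codilation_gram; eassumption. }
  apply (invertible_cancel_r u); [exact Hu |].
  apply (invertible_cancel_l u^*); [apply invertible_star, Hu |].
  rewrite comp_id_l, <- Hgram, star_comp, !comp_assoc. reflexivity.
Qed.

Lemma strictly_contractive_coproduct_codilation {X Y} (f : hom X Y) :
  strictly_contractive f ->
  exists S (s1 : hom X S) (s2 : hom Y S), is_codilation f s1 s2 /\ is_coproduct s1 s2.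
Proof.
  intros Hf. apply hprecE in Hf. destruct Hf as [[W [y Hy]] Hinv].
  rewrite Hy in Hinv.
  destruct (gram_invertible_factor y Hinv) as [J [d [Hd Hdinv]]].
  exists (bp Y J), (bpair f d), (bs1 Y J). apply bpair_codilation_coproduct; [exact Hdinv |].
  rewrite Hd, <- Hy. apply addmNK.
Qed.

Lemma coproduct_codilation_positive_matrix {X Y S} (f : hom X Y) (s1 : hom X S) (s2 : hom Y S) :
  is_codilation f s1 s2 -> is_coproduct s1 s2 ->
  exists m : hom (bp X Y) (bp X Y),
    is_matrix2 m (idm X) f^* f (idm Y) /\ hprec (zero (bp X Y) (bp X Y)) m.
Proof.
  intros Hs Hc. exists ((bcopair s1 s2)^* \o bcopair s1 s2).
  split; [apply codilation_gram, Hs |].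
  apply hprecE. rewrite oppm0, addm0. split.
  - exists S, (bcopair s1 s2). reflexivity.
  - apply invertible_gram, coproduct_iff_invertible_bcopair, Hc.
Qed.

Lemma positive_matrix_strictly_contractive {X Y} (f : hom X Y) (m : hom (bp X Y) (bp X Y)) :
  is_matrix2 m (idm X) f^* f (idm Y) -> hprec (zero (bp X Y) (bp X Y)) m ->
  strictly_contractive f.
Proof.
  intros Hm Hpos. apply hprecE in Hpos. rewrite oppm0, addm0 in Hpos.
  destruct Hpos as [[W [y Hy]] Hinv]. subst m.
  apply hprecE. split.
  - exists W. eapply schur_complement_gram. exact Hm.
  - eapply schur_complement_invertible; eassumption.
Qed.

End PreHilbertTheory.

Theorem theorem7p19 (C : PreHilbert) (X Y : ob C) (f : hom X Y) :
  (strictly_contractive f <->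
     exists (S : ob C) (s1 : hom X S) (s2 : hom Y S),
       is_codilation f s1 s2 /\ is_coproduct s1 s2) /\
  (strictly_contractive f <->
     exists m : hom (bp X Y) (bp X Y),
       is_matrix2 m (idm X) f^* f (idm Y) /\ hprec (@zero C (bp X Y) (bp X Y)) m) /\
  (strictly_contractive f ->
     forall (S : ob C) (s1 : hom X S) (s2 : hom Y S),
       is_codilation f s1 s2 -> is_coproduct s1 s2 -> is_codilator f s1 s2).
Proof.
  pose proof (strictly_contractive_coproduct_codilation C f) as i_ii.
  assert (ii_iii : (exists S (s1 : hom X S) (s2 : hom Y S),
                      is_codilation f s1 s2 /\ is_coproduct s1 s2) ->
                   exists m, is_matrix2 m (idm X) f^* f (idm Y) /\ hprec (zero _ _) m).
  { intros [S [s1 [s2 [Hs Hc]]]]. exact (coproduct_codilation_positive_matrix C f s1 s2 Hs Hc). }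
  assert (iii_i : (exists m, is_matrix2 m (idm X) f^* f (idm Y) /\ hprec (zero _ _) m) ->
                  strictly_contractive f).
  { intros [m [Hm Hpos]]. exact (positive_matrix_strictly_contractive C f m Hm Hpos). }
  split; [| split]; [tauto | tauto |].
  intros _ S s1 s2. apply coproduct_codilation_is_codilator.
Qed.
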